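(* Let $q$ be a prime power and let $\mathcal{H}_q$ be the Hermitian curve in $\mathrm{PG}(2,q^2)$. Let $\mathcal{B}$ be a $2$-blocking set of $\mathcal{H}_q$. Then in $\mathrm{PG}(2,q^2)$ there exist semiovals of size $k$ for every integer $k$ satisfying $|\mathcal{B}|\leq k\leq q^3+1$.
   Context: $\mathrm{PG}(2,q^2)$ is the Desarguesian projective plane over $\mathbb{F}_{q^2}$. The Hermitian curve $\mathcal{H}_q$ is the set of points of $\mathrm{PG}(2,q^2)$ satisfying $X_2X_0^q+X_2^qX_0+X_1^{q+1}=0$; it has $q^3+1$ points, there is a unique tangent line to $\mathcal{H}_q$ at each of its points, and every other line meets $\mathcal{H}_q$ in exactly $q+1$ points ($(q+1)$-secants). A pointset $\mathcal{D}\subset\mathcal{H}_q$ is a $2$-blocking set of $\mathcal{H}_q$ if every $(q+1)$-secant of $\mathcal{H}_q$ contains at least $2$ points of $\mathcal{D}$. A semioval is a non-empty pointset $\mathcal{S}$ such that for every $P\in\mathcal{S}$ there is a unique line $t_P$ with $\mathcal{S}\cap t_P=\{P\}$. *)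

From HB Require Import structures.
From mathcomp Require Import all_boot all_order all_algebra all_field.
Set Implicit Arguments. Unset Strict Implicit. Unset Printing Implicit Defensive.
Import GRing.Theory.
Local Open Scope ring_scope.

(* Points (and, dually, lines) of PG(2,F): nonzero vectors of F^3 normalized so
   that their first nonzero coordinate equals 1 (one canonical representative
   per 1-dimensional subspace). *)
Definition normalized (F : finFieldType) (v : 'rV[F]_3) : bool :=
  [exists i : 'I_3, (v ord0 i == 1) && [forall j : 'I_3, (j < i)%N ==> (v ord0 j == 0)]].

Definition pt (F : finFieldType) := {v : 'rV[F]_3 | normalized v}.

Definition X (F : finFieldType) (P : pt F) (i : nat) : F := (val P) ord0 (inord i).

Definition line (F : finFieldType) (l : pt F) : {set pt F} :=
  [set P : pt F | \sum_(i < 3) (val P) ord0 i * (val l) ord0 i == 0].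

Definition hermitian (F : finFieldType) (q : nat) : {set pt F} :=
  [set P : pt F | X P 2 * X P 0 ^+ q + X P 2 ^+ q * X P 0 + X P 1 ^+ q.+1 == 0].

Definition secant (F : finFieldType) (q : nat) (l : pt F) : bool :=
  #|line l :&: hermitian F q| == q.+1.

Definition two_blocking (F : finFieldType) (q : nat) (D : {set pt F}) : Prop :=
  D \subset hermitian F q /\
  forall l : pt F, secant q l -> (2 <= #|line l :&: D|)%N.

Definition semioval (F : finFieldType) (S : {set pt F}) : Prop :=
  S != set0 /\
  forall P, P \in S -> exists! t : pt F, line t :&: S = [set P].

Definition prime_power (q : nat) : Prop :=
  exists p k : nat, prime p /\ (0 < k)%N /\ q = (p ^ k)%N.

From Pilot Require Import Defs.
From mathcomp Require Import all_boot all_order all_algebra all_field.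
From mathcomp Require Import ring.
Set Implicit Arguments. Unset Strict Implicit. Unset Printing Implicit Defensive.
Import GRing.Theory.
Local Open Scope ring_scope.

(* Every set D with B \subset D \subset H_q is a semioval: at a point P of D the
   tangent line meets H_q, hence D, only in P, while any other line through P is
   a (q+1)-secant and so contains a second point of B.  Adding points of H_q to
   B one at a time then gives all sizes up to |H_q| >= q^3 + 1.
   Both facts about lines come from parametrizing a line through an isotropic
   point p as p and r + c p: the Hermitian form along it is
   Q(r) + Tr(c H(r,p)^q), and the trace x + x^q takes each value of the fixed
   field of x -> x^q exactly q times. *)

Lemma prime_power_gt1 q : prime_power q -> (1 < q)%N.
Proof.
case=> p [[|k] [pp [//= _ ->]]].
exact: leq_trans (prime_gt1 pp) (leq_pexp2l (prime_gt0 pp) (ltn0Sn k)).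
Qed.

Lemma ord3P (i : 'I_3) : [\/ i = inord 0, i = inord 1 | i = inord 2].
Proof.
by case: i => [[|[|[|//]]] Hi]; [apply: Or31|apply: Or32|apply: Or33];
  apply: val_inj; rewrite /= inordK.
Qed.

Section Vec3.
Variable R : comNzRingType.
Implicit Types (u v w : 'rV[R]_3) (a b c : R).

Definition vX v (i : nat) : R := v ord0 (inord i).

Definition vec3 a b c : 'rV[R]_3 :=
  \row_(i < 3) if (i : nat) == 0%N then a else if (i : nat) == 1%N then b else c.

Lemma vX_vec3_0 a b c : vX (vec3 a b c) 0 = a. Proof. by rewrite /vX mxE inordK. Qed.
Lemma vX_vec3_1 a b c : vX (vec3 a b c) 1 = b. Proof. by rewrite /vX mxE inordK. Qed.
Lemma vX_vec3_2 a b c : vX (vec3 a b c) 2 = c. Proof. by rewrite /vX mxE inordK. Qed.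
Lemma vXD u w i : vX (u + w) i = vX u i + vX w i. Proof. by rewrite /vX mxE. Qed.
Lemma vXZ c u i : vX (c *: u) i = c * vX u i. Proof. by rewrite /vX mxE. Qed.
Lemma vXN u i : vX (- u) i = - vX u i. Proof. by rewrite /vX mxE. Qed.
Lemma vX0 i : vX 0 i = 0. Proof. by rewrite /vX mxE. Qed.

Lemma vec3P u w : vX u 0 = vX w 0 -> vX u 1 = vX w 1 -> vX u 2 = vX w 2 -> u = w.
Proof. by move=> e0 e1 e2; apply/rowP => i; case: (ord3P i) => ->. Qed.

Lemma vec3_neq0 a b c : [|| a != 0, b != 0 | c != 0] -> vec3 a b c != 0.
Proof.
apply: contraTneq => v0; move: (vX_vec3_0 a b c) (vX_vec3_1 a b c) (vX_vec3_2 a b c).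
by rewrite v0 !vX0 => <- <- <-; rewrite eqxx.
Qed.

Lemma sum3 (g : 'I_3 -> R) : \sum_(i < 3) g i = g (inord 0) + g (inord 1) + g (inord 2).
Proof.
rewrite !big_ord_recl big_ord0 addr0 addrA; congr (g _ + g _ + g _).
all: by apply: val_inj; rewrite /= inordK.
Qed.

Definition dot3 u w := vX u 0 * vX w 0 + vX u 1 * vX w 1 + vX u 2 * vX w 2.

Definition cross3 u w :=
  vec3 (vX u 1 * vX w 2 - vX u 2 * vX w 1) (vX u 2 * vX w 0 - vX u 0 * vX w 2)
       (vX u 0 * vX w 1 - vX u 1 * vX w 0).

End Vec3.

Ltac vec3_expand :=
  rewrite /dot3 /cross3 ?(vX_vec3_0, vX_vec3_1, vX_vec3_2, vXD, vXZ, vXN, vX0).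
Ltac vec3_ring := try apply: vec3P; vec3_expand; ring.

Section Vec3Identities.
Variable R : comNzRingType.
Implicit Types (u v w s : 'rV[R]_3) (c : R).

Lemma dot3C u w : dot3 u w = dot3 w u. Proof. vec3_ring. Qed.
Lemma dot3Dl u v w : dot3 (u + v) w = dot3 u w + dot3 v w. Proof. vec3_ring. Qed.
Lemma dot3Zl c u w : dot3 (c *: u) w = c * dot3 u w. Proof. vec3_ring. Qed.
Lemma dot3Zr c u w : dot3 u (c *: w) = c * dot3 u w. Proof. vec3_ring. Qed.
Lemma dot3_cross3l u w : dot3 (cross3 u w) u = 0. Proof. vec3_ring. Qed.
Lemma dot3_cross3r u w : dot3 (cross3 u w) w = 0. Proof. vec3_ring. Qed.
Lemma dot3_cross3C u v w : dot3 u (cross3 v w) = dot3 w (cross3 u v). Proof. vec3_ring. Qed.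
Lemma cross3C u w : cross3 u w = - cross3 w u. Proof. vec3_ring. Qed.
Lemma cross3vv u : cross3 u u = 0. Proof. vec3_ring. Qed.
Lemma cross3v0 u : cross3 u 0 = 0. Proof. vec3_ring. Qed.
Lemma cross3Dr u v w : cross3 u (v + w) = cross3 u v + cross3 u w. Proof. vec3_ring. Qed.
Lemma cross3Zr c u w : cross3 u (c *: w) = c *: cross3 u w. Proof. vec3_ring. Qed.
Lemma cross3_cross3r u v w : cross3 u (cross3 v w) = dot3 u w *: v - dot3 u v *: w.
Proof. vec3_ring. Qed.
(* Cramer's rule in the basis u, v, w. *)
Lemma cross3_decomp u v w s :
  dot3 u (cross3 v w) *: s
  = dot3 s (cross3 v w) *: u + dot3 s (cross3 w u) *: v + dot3 s (cross3 u v) *: w.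
Proof. vec3_ring. Qed.

Lemma cross3_pencil u v c : cross3 u (v + c *: u) = cross3 u v.
Proof. by rewrite cross3Dr cross3Zr cross3vv scaler0 addr0. Qed.

End Vec3Identities.

Section Vec3Field.
Variable F : fieldType.
Implicit Types (p u v w s L : 'rV[F]_3).

Lemma vX_neq0 u : u != 0 -> [\/ vX u 0 != 0, vX u 1 != 0 | vX u 2 != 0].
Proof.
move=> u0; case: (eqVneq (vX u 0) 0) => h0; last exact: Or31.
case: (eqVneq (vX u 1) 0) => h1; last exact: Or32.
case: (eqVneq (vX u 2) 0) => h2; last exact: Or33.
by move: u0; rewrite (@vec3P _ u 0) ?vX0 ?eqxx.
Qed.

Lemma exists_dot3_neq0 u : u != 0 -> exists e, dot3 e u != 0.
Proof.
case/vX_neq0 => h; [exists (vec3 1 0 0)|exists (vec3 0 1 0)|exists (vec3 0 0 1)];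
  by rewrite /dot3 !(vX_vec3_0, vX_vec3_1, vX_vec3_2) !(mul0r, mul1r, addr0, add0r).
Qed.

Lemma cross3_eq0 u w : u != 0 -> cross3 u w = 0 -> exists c, w = c *: u.
Proof.
move=> /exists_dot3_neq0 [e eu] uw0; exists (dot3 e w / dot3 e u).
have := cross3_cross3r e u w; rewrite uw0 cross3v0.
move/eqP; rewrite eq_sym subr_eq0 => /eqP /(congr1 ( *:%R (dot3 e u)^-1)).
by rewrite !scalerA mulVf // scale1r => {1}<-; rewrite mulrC.
Qed.

Lemma dot3_cross3_span u v s : cross3 u v != 0 -> dot3 s (cross3 u v) = 0 ->
  exists a b, s = a *: u + b *: v.
Proof.
move=> /exists_dot3_neq0 [e euv] suv; set D := dot3 u (cross3 v e).
have D0 : D != 0 by rewrite /D dot3_cross3C.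
exists (dot3 s (cross3 v e) / D), (dot3 s (cross3 e u) / D).
apply: (scalerI D0); rewrite cross3_decomp suv scale0r addr0 scalerDr !scalerA.
by rewrite !(mulrC D) !divfK.
Qed.

Lemma cross3_line_basis p L : p != 0 -> dot3 p L = 0 ->
  exists r c, c != 0 /\ cross3 p r = c *: L.
Proof.
move=> /exists_dot3_neq0 [e ep] pL; exists (cross3 L e), (dot3 e p); split => //.
by rewrite cross3_cross3r pL scale0r subr0 dot3C.
Qed.

End Vec3Field.

Section Points.
Variable F : finFieldType.
Implicit Types (p r s u v w : 'rV[F]_3) (P S l : pt F).

Definition lead3 v := if vX v 0 != 0 then vX v 0 else if vX v 1 != 0 then vX v 1 else vX v 2.

Lemma lead3Z c v : lead3 (c *: v) = c * lead3 v.
Proof.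
have [->|c0] := eqVneq c 0; first by rewrite scale0r /lead3 !vX0 eqxx mul0r.
by rewrite /lead3 !vXZ !mulf_eq0 (negbTE c0) /=; case: ifP => //; case: ifP.
Qed.

Lemma lead3_neq0 v : v != 0 -> lead3 v != 0.
Proof.
rewrite /lead3 => /vX_neq0 h; case: ifPn => // /negPn/eqP h0.
by case: ifPn => // /negPn/eqP h1; case: h; rewrite ?h0 ?h1 ?eqxx.
Qed.

Lemma normalizedE v : normalized v = (lead3 v == 1).
Proof.
rewrite /normalized /lead3 /vX; apply/existsP/idP => [[i /andP [/eqP vi /forallP vj]]|].
  have vj0 j : (j < i)%N -> v ord0 (inord j) = 0.
    by move=> ji; have := vj (inord j); rewrite inordK ?(ltn_trans ji (ltn_ord i)) // ji => /eqP.
  case: (ord3P i) vi vj0 => -> vi vj0.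
  - by rewrite vi oner_neq0 eqxx.
  - by rewrite (vj0 0%N) ?inordK // eqxx vi oner_neq0 eqxx.
  - by rewrite (vj0 0%N) ?(vj0 1%N) ?inordK // eqxx vi.
case: ifPn => [_ v0|/negPn v0].
  by exists (inord 0); rewrite v0; apply/forallP => j; rewrite inordK.
case: ifPn => [_ v1|/negPn v1 v2]; [exists (inord 1) | exists (inord 2)];
  rewrite ?v1 ?v2 /=; apply/forallP => j; rewrite inordK //.
all: by case: (ord3P j) => ->; rewrite inordK.
Qed.

Definition normalize v := (lead3 v)^-1 *: v.

Lemma normalizeZ c v : c != 0 -> normalize (c *: v) = normalize v.
Proof.
by move=> c0; rewrite /normalize lead3Z scalerA invfM mulrAC mulVf ?mul1r.
Qed.

Lemma normalized_normalize v : v != 0 -> normalized (normalize v).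
Proof. by move=> v0; rewrite normalizedE lead3Z mulVf ?lead3_neq0. Qed.

Lemma lead3_pt P : lead3 (val P) = 1.
Proof. by apply/eqP; rewrite -normalizedE (valP P). Qed.

Lemma val_pt_neq0 P : val P != 0.
Proof.
apply: contra_eq_neq (lead3_pt P) => ->.
by rewrite /lead3 !vX0 eqxx eq_sym oner_neq0.
Qed.

Lemma pt_scale_eq P S c : val P = c *: val S -> P = S.
Proof.
move=> PS; apply: val_inj; have := lead3_pt P.
by rewrite PS lead3Z lead3_pt mulr1 => ->; rewrite scale1r.
Qed.

Lemma normalized_e0 : normalized (vec3 1 0 0 : 'rV[F]_3).
Proof. by rewrite normalizedE /lead3 vX_vec3_0 oner_neq0. Qed.

Definition proj_pt v : pt F := insubd (Sub _ normalized_e0) (normalize v).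

Lemma val_proj_pt v : v != 0 -> val (proj_pt v) = normalize v.
Proof. by move=> v0; rewrite val_insubd normalized_normalize. Qed.

Lemma proj_ptZ c v : c != 0 -> proj_pt (c *: v) = proj_pt v.
Proof. by move=> c0; rewrite /proj_pt normalizeZ. Qed.

Lemma proj_pt_val P : proj_pt (val P) = P.
Proof. by rewrite /proj_pt /normalize lead3_pt invr1 scale1r valKd. Qed.

Lemma proj_pt_eq v w : v != 0 -> w != 0 -> proj_pt v = proj_pt w ->
  exists2 k, k != 0 & v = k *: w.
Proof.
move=> v0 w0 /(congr1 val); rewrite !val_proj_pt // /normalize => vw.
exists (lead3 v / lead3 w); first by rewrite mulf_neq0 ?invr_eq0 ?lead3_neq0.
by rewrite -scalerA -vw scalerA mulfV ?scale1r ?lead3_neq0.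
Qed.

Lemma mem_line P l : (P \in line l) = (dot3 (val P) (val l) == 0).
Proof. by rewrite inE sum3. Qed.

Lemma mem_line_proj_pt v w : v != 0 -> w != 0 ->
  (proj_pt v \in line (proj_pt w)) = (dot3 v w == 0).
Proof.
move=> v0 w0; rewrite mem_line !val_proj_pt // /normalize dot3Zl dot3Zr !mulf_eq0 !invr_eq0.
by rewrite !(negbTE (lead3_neq0 _)).
Qed.

Lemma pencil_neq0 p r c : cross3 p r != 0 -> r + c *: p != 0.
Proof. by move=> pr; apply: contra_neq pr => e; rewrite -(cross3_pencil p r c) e cross3v0. Qed.

Lemma cross3_neq0_l p r : cross3 p r != 0 -> p != 0.
Proof. by apply: contra_neq => ->; rewrite cross3C cross3v0 oppr0. Qed.

Lemma proj_pt_pencil_inj p r : cross3 p r != 0 -> injective (fun c => proj_pt (r + c *: p)).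
Proof.
move=> pr c1 c2 /(proj_pt_eq (pencil_neq0 c1 pr) (pencil_neq0 c2 pr)) [k _ e].
have k1 : k = 1.
  have := congr1 (cross3 p) e; rewrite cross3Zr !cross3_pencil => /eqP.
  rewrite -subr_eq0 -{1}[cross3 p r]scale1r -scalerBl scaler_eq0 (negbTE pr) orbF.
  by rewrite subr_eq0 eq_sym => /eqP.
move: e; rewrite k1 scale1r => /addrI/eqP.
by rewrite -subr_eq0 -scalerBl scaler_eq0 (negbTE (cross3_neq0_l pr)) orbF subr_eq0 => /eqP.
Qed.

Lemma proj_pt_pencil_neq p r c : cross3 p r != 0 -> proj_pt (r + c *: p) != proj_pt p.
Proof.
move=> pr; apply/eqP => /(proj_pt_eq (pencil_neq0 c pr) (cross3_neq0_l pr)) [k _].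
move=> /(congr1 (cross3 p)); rewrite cross3Zr cross3vv scaler0 cross3_pencil.
by move/eqP; rewrite (negbTE pr).
Qed.

Lemma proj_pt_pencil p r s : cross3 p r != 0 -> s != 0 -> dot3 s (cross3 p r) = 0 ->
  proj_pt s = proj_pt p \/ exists c, proj_pt s = proj_pt (r + c *: p).
Proof.
move=> pr s0 /(dot3_cross3_span pr) [a [b sE]].
have [b0|b0] := eqVneq b 0.
  left; move: s0; rewrite sE b0 scale0r addr0 => s0; apply: proj_ptZ.
  by apply: contra_neq s0 => ->; rewrite scale0r.
right; exists (a / b); apply/esym.
by rewrite sE -(proj_ptZ _ b0) scalerDr scalerA mulrCA mulfV // mulr1 addrC.
Qed.

Lemma mem_line_proj_pt_r P w : w != 0 -> (P \in line (proj_pt w)) = (dot3 (val P) w == 0).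
Proof. by move=> w0; rewrite -{1}(proj_pt_val P) mem_line_proj_pt ?val_pt_neq0. Qed.

Lemma line_cross3 P l : P \in line l ->
  exists2 r, cross3 (val P) r != 0 & l = proj_pt (cross3 (val P) r).
Proof.
rewrite mem_line => /eqP /(cross3_line_basis (val_pt_neq0 P)) [r [c [c0 E]]].
exists r; first by rewrite E scaler_eq0 negb_or c0 val_pt_neq0.
by rewrite E proj_ptZ // proj_pt_val.
Qed.

Lemma line_pencil p r : cross3 p r != 0 ->
  line (proj_pt (cross3 p r)) = proj_pt p |: [set proj_pt (r + c *: p) | c : F].
Proof.
move=> pr; have p0 := cross3_neq0_l pr; apply/setP => S; rewrite in_setU1.
apply/idP/orP => [|[/eqP ->|/imsetP [c _ ->]]]; last first.
- rewrite mem_line_proj_pt ?pencil_neq0 // dot3Dl dot3Zl !(dot3C _ (cross3 p r)).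
  by rewrite dot3_cross3l dot3_cross3r mulr0 addr0.
- by rewrite mem_line_proj_pt // dot3C dot3_cross3l.
rewrite mem_line_proj_pt_r // => /eqP /(proj_pt_pencil pr (val_pt_neq0 S)).
by rewrite proj_pt_val => -[->|[c ->]]; [left | right; apply: imset_f].
Qed.

Lemma vec3_1_neq0 (a b : F) : vec3 1 a b != 0.
Proof. by rewrite vec3_neq0 ?oner_neq0. Qed.

Lemma proj_pt_affine_inj : injective (fun u : F * F => proj_pt (vec3 1 u.1 u.2)).
Proof.
move=> [a b] [a' b'] /= /(proj_pt_eq (vec3_1_neq0 _ _) (vec3_1_neq0 _ _)) [k _ E].
have k1 : k = 1 by have := congr1 (fun v => vX v 0) E; rewrite vXZ !vX_vec3_0 mulr1.
have := congr1 (fun v => vX v 1) E; have := congr1 (fun v => vX v 2) E.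
by rewrite !vXZ k1 !mul1r !vX_vec3_1 !vX_vec3_2 => /= -> ->.
Qed.

Lemma proj_pt_affine_neq (a b : F) : proj_pt (vec3 1 a b) != proj_pt (vec3 0 0 1).
Proof.
apply/eqP => /(proj_pt_eq (vec3_1_neq0 _ _)) [|k _ /(congr1 (fun v => vX v 0))].
  by rewrite vec3_neq0 ?oner_neq0 ?orbT.
by rewrite vXZ !vX_vec3_0 mulr0 => /eqP; rewrite oner_eq0.
Qed.

End Points.

Section Hermitian.
Variables (F : finFieldType) (q : nat).
Hypotheses (hq : prime_power q) (hF : #|F| = (q ^ 2)%N).

Definition frob (x : F) := x ^+ q.

Lemma q_gt1 : (1 < q)%N. Proof. exact: prime_power_gt1. Qed.

Lemma frobD x y : frob (x + y) = frob x + frob y.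
Proof.
case: hq => p [k [pp [_ Eq]]].
have charF : p \in [pchar F].
  by apply: (@card_finPcharP _ p (k * 2)) => //; rewrite hF Eq -expnM.
apply: exprDn_pchar; rewrite (eq_pnat _ (pcharf_eq charF)) Eq.
by rewrite pnatX pnat_id.
Qed.

Lemma frobM x y : frob (x * y) = frob x * frob y. Proof. exact: exprMn. Qed.

Lemma frobK : involutive frob.
Proof. by move=> x; rewrite /frob -exprM mulnn -hF expf_card. Qed.

Lemma frob0 : frob 0 = 0. Proof. by rewrite /frob expr0n; case: q q_gt1. Qed.
Lemma frob1 : frob 1 = 1. Proof. exact: expr1n. Qed.

Lemma frobN x : frob (- x) = - frob x.
Proof. by apply/eqP; rewrite -subr_eq0 opprK -frobD addNr frob0. Qed.

Lemma frob_eq0 x : (frob x == 0) = (x == 0).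
Proof. by rewrite expf_eq0; case: q q_gt1. Qed.

(* [A] consists of roots of the degree-[q] polynomial x^q + s x. *)
Lemma card_frob_lin_roots (s : F) (A : {set F}) :
  (forall x, x \in A -> frob x + s * x = 0) -> (#|A| <= q)%N.
Proof.
move=> rootA; pose P : {poly F} := 'X^q + s *: 'X.
have sizeP : size P = q.+1.
  rewrite size_addl ?size_polyXn // (leq_ltn_trans (size_scale_leq _ _)) //.
  by rewrite size_polyX ltnS q_gt1.
rewrite -ltnS -sizeP cardE max_poly_roots ?enum_uniq //.
  by rewrite -size_poly_eq0 sizeP.
by apply/allP => x; rewrite mem_enum /root !hornerE => /rootA ->.
Qed.

Definition trace (z : F) := z + frob z.

Definition trace_fiber (c : F) := [set z | trace z == c].

Lemma card_trace_kernel_le : (#|trace_fiber 0%R| <= q)%N.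
Proof. by apply: (card_frob_lin_roots (s := 1)) => x; rewrite inE mul1r addrC => /eqP. Qed.

Lemma card_frob_fixed_le : (#|[set c : F | frob c == c]| <= q)%N.
Proof.
by apply: (card_frob_lin_roots (s := -1)) => x; rewrite inE mulN1r => /eqP ->; rewrite subrr.
Qed.

Lemma trace_frob_fixed z : frob (trace z) = trace z.
Proof. by rewrite /trace frobD frobK addrC. Qed.

(* Nonempty fibers of the additive map [trace] are cosets of its kernel. *)
Lemma card_trace_fiber c z : z \in trace_fiber c -> #|trace_fiber c| = #|trace_fiber 0%R|.
Proof.
rewrite inE /trace => /eqP zc.
rewrite -(card_imset (trace_fiber 0) (addrI z)); apply: eq_card => y.
apply/idP/imsetP => [|[w]]; rewrite !inE /trace.
  move=> /eqP yc; exists (y - z); last by rewrite addrC subrK.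
  by rewrite inE /trace frobD frobN addrACA yc -opprD zc subrr.
by move=> /eqP w0 ->; rewrite frobD addrACA w0 addr0 zc.
Qed.

(* |F| = |im trace| |ker trace| with both factors at most q, so both equal q
   and trace maps onto the fixed field of [frob]. *)
Lemma card_trace_fiber_frob_fixed c : frob c = c -> #|trace_fiber c| = q.
Proof.
move=> fc; set K := [set c : F | frob c == c]; set I := trace @: [set: F].
have IK : I \subset K by apply/subsetP => _ /imsetP [z _ ->]; rewrite inE trace_frob_fixed.
have cardF : #|F| = (#|I| * #|trace_fiber 0%R|)%N.
  rewrite -[#|F|]sum1_card (partition_big trace (mem I)) /=; last by move=> z _; apply: imset_f.
  rewrite -sum_nat_const; apply: eq_bigr => _ /imsetP [z _ ->].
  by rewrite sum1dep_card -(@card_trace_fiber (trace z) z) ?inE.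
have IK_card := subset_leq_card IK; have K_card := card_frob_fixed_le.
have ker_card := card_trace_kernel_le; have := q_gt1; rewrite hF -mulnn in cardF => q1.
have cardI : #|I| = q.
  apply/eqP; rewrite eqn_leq (leq_trans IK_card K_card) /= leqNgt; apply/negP => Iq.
  by move: (ltn_mull (ltnW q1) Iq ker_card); rewrite -cardF ltnn.
have cI : c \in I.
  suff -> : I = K by rewrite inE fc.
  by apply/eqP; rewrite eqEcard IK cardI K_card.
case/imsetP: cI => z _ cz; rewrite (@card_trace_fiber c z) ?inE ?cz //.
by apply/eqP; rewrite -(eqn_pmul2l (ltnW q1)) -{1}cardI -cardF.
Qed.

Implicit Types (p r s u v w : 'rV[F]_3) (P S l : pt F).
Local Notation Hq := (Defs.hermitian F q).

(* [hform] is the sesquilinear form of H_q, [hquad v = 0] the equation of H_q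
   and [polar p] the coordinates of the polar line of [p]. *)
Definition hform u w := vX u 0 * frob (vX w 2) + vX u 1 * frob (vX w 1) + vX u 2 * frob (vX w 0).
Definition hquad v := hform v v.
Definition polar p := vec3 (frob (vX p 2)) (frob (vX p 1)) (frob (vX p 0)).

Ltac herm_ring := try apply: vec3P; rewrite /hquad /hform /polar; vec3_expand;
  rewrite ?(frobD, frobM, frobN, frobK, frob0, frob1); ring.

Lemma hquadZ c v : hquad (c *: v) = c * frob c * hquad v. Proof. herm_ring. Qed.
Lemma hquad_pencil r p c : hquad (r + c *: p)
  = hquad r + c * frob c * hquad p + c * frob (hform r p) + frob c * hform r p.
Proof. herm_ring. Qed.
Lemma hform_pencil r p c : hform (r + c *: p) p = hform r p + c * hquad p. Proof. herm_ring. Qed.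
Lemma frob_hquad v : frob (hquad v) = hquad v. Proof. herm_ring. Qed.
Lemma dot3_polar r p : dot3 r (polar p) = hform r p. Proof. herm_ring. Qed.

Lemma polar_neq0 p : p != 0 -> polar p != 0.
Proof. by case/vX_neq0 => h; apply: vec3_neq0; rewrite !frob_eq0 h ?orbT. Qed.

Lemma hquad_vX1_eq0 p : hquad p = 0 -> vX p 0 = 0 -> vX p 1 = 0.
Proof.
move=> hp x0; have : vX p 1 * frob (vX p 1) == 0.
  by rewrite -hp /hquad /hform x0 frob0; apply/eqP; ring.
by rewrite mulf_eq0 frob_eq0 orbb => /eqP.
Qed.

Lemma isotropic_polar p r : p != 0 -> hquad p = 0 -> hquad r = 0 -> hform r p = 0 ->
  exists c, r = c *: p.
Proof.
move=> p0 hp hr hrp; have [x0|x0] := eqVneq (vX p 0) 0.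
  have x1 := hquad_vX1_eq0 hp x0.
  have x2 : vX p 2 != 0 by case: (vX_neq0 p0); rewrite ?x0 ?x1 ?eqxx.
  have r0 : vX r 0 = 0.
    have : vX r 0 * frob (vX p 2) == 0 by rewrite -hrp /hform x0 x1 frob0; apply/eqP; ring.
    by rewrite mulf_eq0 frob_eq0 (negbTE x2) orbF => /eqP.
  exists (vX r 2 / vX p 2); apply: vec3P; rewrite vXZ ?x0 ?x1 ?r0 ?(hquad_vX1_eq0 hr r0).
  - by rewrite mulr0.
  - by rewrite mulr0.
  - by rewrite divfK.
pose c := vX r 0 / vX p 0; pose r' := r - c *: p.
have hr' : hquad r' = 0.
  by rewrite /r' -scaleNr hquad_pencil hp hrp hr frob0; ring.
have hr'p : hform r' p = 0 by rewrite /r' -scaleNr hform_pencil hrp hp; ring.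
have r'0 : vX r' 0 = 0 by rewrite /r' vXD vXN vXZ /c divfK // subrr.
have r'1 := hquad_vX1_eq0 hr' r'0.
have r'2 : vX r' 2 = 0.
  have : vX r' 2 * frob (vX p 0) == 0 by rewrite -hr'p /hform r'0 r'1; apply/eqP; ring.
  by rewrite mulf_eq0 frob_eq0 (negbTE x0) orbF => /eqP.
exists c; apply/eqP; rewrite -subr_eq0; apply/eqP.
by apply: (@vec3P _ r' 0); rewrite vX0.
Qed.

Lemma mem_hermitian P : (P \in Hq) = (hquad (val P) == 0).
Proof. by rewrite inE /hquad /hform /frob /Defs.X /vX exprS; congr (_ == 0); ring. Qed.

Lemma hermitian_proj_pt v : v != 0 -> (proj_pt v \in Hq) = (hquad v == 0).
Proof.
move=> v0; rewrite mem_hermitian val_proj_pt // /normalize hquadZ !mulf_eq0 frob_eq0 orbb.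
by rewrite invr_eq0 (negbTE (lead3_neq0 v0)).
Qed.

Definition tangent P := proj_pt (polar (val P)).

Lemma mem_tangent P : P \in Hq -> P \in line (tangent P).
Proof.
by rewrite mem_hermitian mem_line_proj_pt_r ?polar_neq0 ?val_pt_neq0 // dot3_polar.
Qed.

Lemma tangent_hermitian P : P \in Hq ->
  line (tangent P) :&: Hq = [set P].
Proof.
move=> HP; apply/setP => S; rewrite in_setI in_set1.
apply/andP/eqP => [[]|->]; last by rewrite mem_tangent.
rewrite mem_line_proj_pt_r ?polar_neq0 ?val_pt_neq0 //.
rewrite dot3_polar !mem_hermitian in HP * => /eqP hSP /eqP hS.
have [c SP] := isotropic_polar (val_pt_neq0 P) (eqP HP) hS hSP.
exact: pt_scale_eq SP.
Qed.

Lemma off_tangent_hform p r : p != 0 -> hquad p = 0 -> cross3 p r != 0 ->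
  proj_pt (cross3 p r) != proj_pt (polar p) -> hform r p != 0.
Proof.
move=> p0 hp pr; apply: contra_neq => hrp.
have : cross3 (polar p) (cross3 p r) = 0.
  by rewrite cross3_cross3r !(dot3C (polar p)) !dot3_polar hrp -/(hquad p) hp !scale0r subrr.
case/(cross3_eq0 (polar_neq0 p0)) => k prk.
by rewrite prk proj_ptZ //; apply: contra_neq pr => k0; rewrite prk k0 scale0r.
Qed.

Lemma card_pencil_hermitian p r : hquad p = 0 -> hform r p != 0 ->
  #|[set c | hquad (r + c *: p) == 0]| = q.
Proof.
move=> hp hrp; set g := hform r p.
have -> : [set c | hquad (r + c *: p) == 0] = (fun c => c * frob g) @^-1: trace_fiber (- hquad r).
  apply/setP => c; rewrite !inE hquad_pencil hp mulr0 addr0 /trace frobM frobK.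
  by rewrite -addrA addrC addr_eq0.
rewrite (@card_preimset F) ?card_trace_fiber_frob_fixed ?frobN ?frob_hquad //.
by apply: mulIf; rewrite frob_eq0.
Qed.

Lemma hermitian_line_pencil p r : hquad p = 0 -> cross3 p r != 0 ->
  line (proj_pt (cross3 p r)) :&: Hq
  = proj_pt p |: [set proj_pt (r + c *: p) | c in [set c | hquad (r + c *: p) == 0]].
Proof.
move=> hp pr; have p0 := cross3_neq0_l pr.
rewrite line_pencil // setIUl; congr (_ :|: _).
  by apply/setIidPl; rewrite sub1set hermitian_proj_pt // hp.
apply/setP => S; rewrite in_setI; apply/andP/imsetP => [[/imsetP [c _ ->]]|[c]].
  by rewrite hermitian_proj_pt ?pencil_neq0 // => hc; exists c; rewrite ?inE.
rewrite inE => hc ->; split; first exact: imset_f.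
by rewrite hermitian_proj_pt ?pencil_neq0.
Qed.

Lemma card_line_hermitian P l : P \in Hq -> P \in line l -> l != tangent P ->
  #|line l :&: Hq| = q.+1.
Proof.
move=> HP /line_cross3 [r pr ->]; rewrite /tangent => lt.
have hp : hquad (val P) = 0 by apply/eqP; rewrite -mem_hermitian.
have hrp := off_tangent_hform (val_pt_neq0 P) hp pr lt.
rewrite hermitian_line_pencil // cardsU1 (card_imset _ (proj_pt_pencil_inj pr)).
rewrite card_pencil_hermitian //; case: imsetP => // -[c _ E].
by move: (proj_pt_pencil_neq c pr); rewrite E eqxx.
Qed.

Lemma hquad_affine a b : hquad (vec3 1 a b) = trace b + a * frob a.
Proof. by rewrite /trace; herm_ring. Qed.

Lemma card_affine_hermitian : #|[set u : F * F | hquad (vec3 1 u.1 u.2) == 0]| = (q ^ 3)%N.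
Proof.
pose on_curve a b := hquad (vec3 1 a b) == 0.
rewrite -sum1dep_card (eq_bigl (fun u : F * F => xpredT u.1 && on_curve u.1 u.2)) //.
rewrite -(pair_big_dep xpredT on_curve (fun _ _ => 1%N)) /=.
rewrite (eq_bigr (fun _ => q)) => [|a _]; first by rewrite sum_nat_const hF -expnSr.
rewrite sum1dep_card -(@card_trace_fiber_frob_fixed (- (a * frob a))).
  by apply: eq_card => b; rewrite !inE /on_curve hquad_affine addr_eq0.
by rewrite frobN frobM frobK mulrC.
Qed.

Lemma card_hermitian_ge : (q ^ 3 + 1 <= #|Hq|)%N.
Proof.
pose aff (u : F * F) := proj_pt (vec3 1 u.1 u.2).
pose A := [set u : F * F | hquad (vec3 1 u.1 u.2) == 0].
have e3_0 : vec3 0 0 1 != 0 :> 'rV[F]_3 by rewrite vec3_neq0 ?oner_neq0 ?orbT.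
have sub : proj_pt (vec3 0 0 1) |: aff @: A \subset Hq.
  apply/subsetP => _ /setU1P [->|/imsetP [u Au ->]].
    by rewrite hermitian_proj_pt //; apply/eqP; herm_ring.
  by rewrite hermitian_proj_pt ?vec3_1_neq0 //; rewrite inE in Au.
apply: leq_trans (subset_leq_card sub).
rewrite cardsU1 (card_imset _ (@proj_pt_affine_inj F)) card_affine_hermitian addnC.
by case: imsetP => // -[u _ /esym/eqP]; rewrite (negbTE (proj_pt_affine_neq _ _)).
Qed.

Lemma exists_secant : exists l, secant q l.
Proof.
pose P := proj_pt (vec3 0 0 1 : 'rV[F]_3); pose l := proj_pt (vec3 0 1 0 : 'rV[F]_3).
have e2 : vec3 0 0 1 != 0 :> 'rV[F]_3 by rewrite vec3_neq0 ?oner_neq0 ?orbT.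
have e1 : vec3 0 1 0 != 0 :> 'rV[F]_3 by rewrite vec3_neq0 ?oner_neq0 ?orbT.
have e0 : vec3 1 0 0 != 0 :> 'rV[F]_3 by rewrite vec3_1_neq0.
have HP : P \in Hq by rewrite hermitian_proj_pt //; apply/eqP; herm_ring.
have Pl : P \in line l by rewrite mem_line_proj_pt //; apply/eqP; vec3_ring.
have tP : tangent P = proj_pt (vec3 1 0 0).
  rewrite /tangent val_proj_pt // /normalize /lead3 !(vX_vec3_0, vX_vec3_1, vX_vec3_2) eqxx.
  by rewrite invr1 scale1r; congr proj_pt; herm_ring.
have lt : l != tangent P.
  rewrite tP; apply/eqP => /(proj_pt_eq e1 e0) [k _ /(congr1 (fun v => vX v 1))].
  by rewrite vXZ !vX_vec3_1 mulr0 => /eqP; rewrite oner_eq0.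
by exists l; rewrite /secant (card_line_hermitian HP Pl lt).
Qed.

End Hermitian.

Lemma exists_set_between (T : finType) (A C : {set T}) k :
  A \subset C -> (#|A| <= k <= #|C|)%N ->
  exists D : {set T}, [/\ A \subset D, D \subset C & #|D| = k].
Proof.
move=> AC /andP [Ak]; rewrite -(subnKC Ak); elim: (k - #|A|)%N => [|n IH] kC.
  by exists A; rewrite addn0.
rewrite addnS in kC; have [D [AD DC cD]] := IH (ltnW kC).
have /properP [_ [x xC xD]] : D \proper C by rewrite properEcard DC cD.
exists (x |: D); split; first exact: subset_trans AD (subsetUr _ _).
  by rewrite subUset sub1set xC.
by rewrite cardsU1 xD cD addnS.
Qed.

Section SemiovalsOnHermitian.
Variables (F : finFieldType) (q : nat).
Hypotheses (hq : prime_power q) (hF : #|F| = (q ^ 2)%N).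
Local Notation Hq := (Defs.hermitian F q).
Implicit Types B D : {set pt F}.

Lemma two_blocking_card_ge2 B : two_blocking q B -> (2 <= #|B|)%N.
Proof.
case=> _ blockB; have [l sl] := exists_secant hq hF.
exact: leq_trans (blockB l sl) (subset_leq_card (subsetIr _ _)).
Qed.

Lemma semioval_between B D : two_blocking q B -> B \subset D -> D \subset Hq ->
  D != set0 -> semioval D.
Proof.
move=> [_ blockB] BD DH D0; split=> // P PD; have HP := subsetP DH P PD.
exists (tangent q P); split.
  apply/eqP; rewrite eqEsubset sub1set in_setI PD (mem_tangent hq HP) andbT.
  by rewrite -(tangent_hermitian hq hF HP) setIS.
move=> l lD; have Pl : P \in line l by have := set11 P; rewrite -lD => /setIP [].
apply/eqP; rewrite eq_sym; apply: contraT => lt.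
have := blockB l; rewrite /secant (card_line_hermitian hq hF HP Pl lt) eqxx => /(_ isT).
have := subset_leq_card (setIS (line l) BD); rewrite lD cards1.
by move=> /[swap] /leq_trans /[apply].
Qed.

End SemiovalsOnHermitian.

Theorem mainTheorem2 (F : finFieldType) (q : nat)
  (hq : prime_power q) (hF : #|F| = (q ^ 2)%N)
  (B : {set pt F}) (hB : two_blocking q B) :
  forall k : nat, (#|B| <= k <= q ^ 3 + 1)%N ->
    exists S : {set pt F}, semioval S /\ #|S| = k.
Proof.
move=> k /andP [Bk kq].
have kH : (#|B| <= k <= #|Defs.hermitian F q|)%N.
  by rewrite Bk (leq_trans kq) ?card_hermitian_ge.
have [D [BD DH cD]] := exists_set_between hB.1 kH.
exists D; split=> //; apply: (semioval_between hq hF hB BD DH).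
apply/set0Pn/card_gt0P; rewrite cD (leq_trans _ Bk) //.
exact: leq_trans _ (two_blocking_card_ge2 hq hF hB).
Qed.
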